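(* Let $\mathbb{K}$ be a field of characteristic $0$, let $(\mathcal{P},\cdot,\{\,,\})$ be a Poisson superalgebra over $\mathbb{K}$, and let $xy=x\cdot y+\{x,y\}$ be the associated nonassociative product. Let $y\in\mathcal{P}$ be homogeneous (of degree $0$ or $1$). Define $y^1=y$ and $y^{n}=y\,y^{n-1}$ for $n\ge2$. Then $y^p y^q=y^{p+q}$ for all integers $p,q\ge1$; consequently the subalgebra of $(\mathcal{P},xy)$ generated by $y$ is associative. Moreover, if $y$ is odd, then $y\cdot y=0$ and $y^2=\{y,y\}$.
   Context: A super vector space is a $\mathbb{Z}_2$-graded vector space $\mathcal{P}=\mathcal{P}_0\oplus\mathcal{P}_1$; $|x|\in\{0,1\}$ denotes the degree of a homogeneous element $x$ (odd means degree $1$). A Poisson superalgebra is a super vector space with two even bilinear products $x\cdot y$ and $\{x,y\}$ such that $(\mathcal{P},\cdot)$ is associative and supercommutative ($x\cdot y=(-1)^{|x||y|}y\cdot x$), $(\mathcal{P},\{\,,\})$ is a Lie superalgebra ($\{x,y\}=-(-1)^{|x||y|}\{y,x\}$ and $(-1)^{|z||x|}\{x,\{y,z\}\}+(-1)^{|x||y|}\{y,\{z,x\}\}+(-1)^{|y||z|}\{z,\{x,y\}\}=0$), and the super Leibniz rule $\{x,y\cdot z\}=\{x,y\}\cdot z+(-1)^{|x||y|}y\cdot\{x,z\}$ holds, for homogeneous $x,y,z$. *)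

From HB Require Import structures.
From mathcomp Require Import all_boot all_order all_algebra.
Set Implicit Arguments. Unset Strict Implicit. Unset Printing Implicit Defensive.
Import GRing.Theory.
Local Open Scope ring_scope.

(* Sign (-1)^(a b) for degrees a b : bool (false = even = 0, true = odd = 1). *)
Definition ssign (K : fieldType) (a b : bool) : K := (-1) ^+ (a && b).

(* A super vector space structure on P is given by the predicates
   [hom false] (= P_0) and [hom true] (= P_1), which must be subspaces
   with P = P_0 (+) P_1 (direct sum). *)
Record super_space (K : fieldType) (P : lmodType K) (hom : bool -> pred P) : Prop := {
  hom0 : forall b, hom b 0;
  homD : forall b x y, hom b x -> hom b y -> hom b (x + y);
  homZ : forall b (k : K) x, hom b x -> hom b (k *: x);
  hom_decomp : forall x, exists x0 x1, [/\ hom false x0, hom true x1 & x = x0 + x1];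
  hom_direct : forall x, hom false x -> hom true x -> x = 0
}.

Definition bilinear_op (K : fieldType) (P : lmodType K) (op : P -> P -> P) : Prop :=
  (forall (k : K) x y z, op (k *: x + y) z = k *: op x z + op y z) /\
  (forall (k : K) x y z, op x (k *: y + z) = k *: op x y + op x z).

Record poisson_superalgebra (K : fieldType) (P : lmodType K)
    (hom : bool -> pred P) (mul br : P -> P -> P) : Prop := {
  ps_super : super_space hom;
  ps_mul_bilin : bilinear_op mul;
  ps_br_bilin : bilinear_op br;
  ps_mul_even : forall a b x y, hom a x -> hom b y -> hom (a (+) b) (mul x y);
  ps_br_even : forall a b x y, hom a x -> hom b y -> hom (a (+) b) (br x y);
  ps_mul_assoc : forall x y z, mul x (mul y z) = mul (mul x y) z;
  ps_mul_scomm : forall a b x y, hom a x -> hom b y ->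
      mul x y = ssign K a b *: mul y x;
  ps_br_santi : forall a b x y, hom a x -> hom b y ->
      br x y = - (ssign K a b *: br y x);
  ps_br_jacobi : forall a b c x y z, hom a x -> hom b y -> hom c z ->
      ssign K c a *: br x (br y z) + ssign K a b *: br y (br z x)
      + ssign K b c *: br z (br x y) = 0;
  ps_leibniz : forall a b c x y z, hom a x -> hom b y -> hom c z ->
      br x (mul y z) = mul (br x y) z + ssign K a b *: mul y (br x z)
}.

Definition nprod (K : fieldType) (P : lmodType K) (mul br : P -> P -> P) (x y : P) : P :=
  mul x y + br x y.

(* Powers: npow 1 = y, npow (n+2) = y (npow (n+1)); npow 0 is an unused dummy (0). *)
Definition npow (K : fieldType) (P : lmodType K) (mul br : P -> P -> P) (y : P) (n : nat) : P :=
  match n with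
  | 0 => 0
  | n'.+1 => iter n' (nprod mul br y) y
  end.

Inductive gen_subalg (K : fieldType) (P : lmodType K) (mul br : P -> P -> P) (y : P) : P -> Prop :=
  | gen_base : gen_subalg mul br y y
  | gen_zero : gen_subalg mul br y 0
  | gen_add : forall a b, gen_subalg mul br y a -> gen_subalg mul br y b -> gen_subalg mul br y (a + b)
  | gen_scale : forall (k : K) a, gen_subalg mul br y a -> gen_subalg mul br y (k *: a)
  | gen_prod : forall a b, gen_subalg mul br y a -> gen_subalg mul br y b ->
      gen_subalg mul br y (nprod mul br a b).

From HB Require Import structures.
From mathcomp Require Import all_boot all_order all_algebra.
Import GRing.Theory.
Set Implicit Arguments. Unset Strict Implicit.
Local Open Scope ring_scope.

(* Put w = y y = y.y + {y,y}.  The element w is even and {y,w} = 0 (for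
   even y by Leibniz and {y,y} = 0; for odd y because y.y = 0 and the
   super Jacobi identity gives 3{y,{y,y}} = 0).  For homogeneous elements
   Poisson-commuting with an even w, multiplication by w in (P, .) commutes
   with the product xy in both arguments.  Hence the powers are
     y^(n+1) = w^(n/2) . (y if n is even, w if n is odd),
   and y^p y^q = y^(p+q) reduces to the four products of y and w. *)

Section LinearMaps.
Variables (K : fieldType) (P : lmodType K) (f : P -> P).
Hypothesis f_lin : linear f.

Lemma lin0 : f 0 = 0.
Proof.
have := f_lin 1 0 0; rewrite scaler0 addr0 scale1r.
by move=> /(congr1 (fun v => v - f 0)); rewrite subrr addrK => <-.
Qed.

Lemma linD x z : f (x + z) = f x + f z.
Proof. by have := f_lin 1 x z; rewrite !scale1r. Qed.

Lemma linZ k x : f (k *: x) = k *: f x.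
Proof. by have := f_lin k x 0; rewrite !addr0 lin0 addr0. Qed.

End LinearMaps.

Lemma lin_comp (K : fieldType) (P : lmodType K) (f g : P -> P) :
  linear f -> linear g -> linear (f \o g).
Proof. by move=> f_lin g_lin k x z /=; rewrite g_lin f_lin. Qed.

Inductive span (K : fieldType) (P : lmodType K) (S : P -> Prop) : P -> Prop :=
  | span_gen s : S s -> span S s
  | span0 : span S 0
  | spanD a b : span S a -> span S b -> span S (a + b)
  | spanZ (k : K) a : span S a -> span S (k *: a).

Section Span.
Variables (K : fieldType) (P : lmodType K).

Lemma span_map (f : P -> P) (S T : P -> Prop) : linear f ->
  (forall s, S s -> span T (f s)) -> forall a, span S a -> span T (f a).
Proof.
move=> f_lin fS a; elim=> [s /fS //||b c _ Tb _ Tc|k b _ Tb].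
- by rewrite (lin0 f_lin); apply: span0.
- by rewrite (linD f_lin); apply: spanD.
- by rewrite (linZ f_lin); apply: spanZ.
Qed.

Lemma span_ext (f g : P -> P) (S : P -> Prop) : linear f -> linear g ->
  (forall s, S s -> f s = g s) -> forall a, span S a -> f a = g a.
Proof.
move=> f_lin g_lin fgS a; elim=> [s /fgS //||b c _ fgb _ fgc|k b _ fgb].
- by rewrite (lin0 f_lin) (lin0 g_lin).
- by rewrite (linD f_lin) (linD g_lin) fgb fgc.
- by rewrite (linZ f_lin) (linZ g_lin) fgb.
Qed.

End Span.

Section Bilinear.
Variables (K : fieldType) (P : lmodType K) (op : P -> P -> P).
Hypothesis op_bilin : bilinear_op op.

Lemma bilin_l z : linear (op ^~ z).
Proof. by move=> k x x'; apply: op_bilin.1. Qed.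

Lemma bilin_r z : linear (op z).
Proof. by move=> k x x'; apply: op_bilin.2. Qed.

Lemma op0l z : op 0 z = 0. Proof. exact: lin0 (bilin_l z). Qed.
Lemma op0r z : op z 0 = 0. Proof. exact: lin0 (bilin_r z). Qed.
Lemma opDr z x x' : op z (x + x') = op z x + op z x'. Proof. exact: linD (bilin_r z) x x'. Qed.
Lemma opZr z k x : op z (k *: x) = k *: op z x. Proof. exact: linZ (bilin_r z) k x. Qed.

End Bilinear.

Section CharZero.
Variables (K : fieldType) (P : lmodType K).
Hypothesis K_char0 : [pchar K] =i pred0.

Lemma scale_nat_eq0 (n : nat) (v : P) : (0 < n)%N -> v *+ n = 0 -> v = 0.
Proof.
move=> n_gt0; rewrite -scaler_nat => /eqP; rewrite scaler_eq0 => /orP[|/eqP //].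
by rewrite (pcharf0P _).1 // => /eqP n0; rewrite n0 in n_gt0.
Qed.

Lemma eq_opp_eq0 (v : P) : v = - v -> v = 0.
Proof. by move=> vN; apply: (@scale_nat_eq0 2) => //; rewrite mulr2n {2}vN subrr. Qed.

End CharZero.

Lemma ssignF (K : fieldType) a : ssign K a false = 1.
Proof. by rewrite /ssign andbF expr0. Qed.

Lemma ssignTT (K : fieldType) : ssign K true true = -1.
Proof. by rewrite /ssign expr1. Qed.

Section Poisson.
Variables (K : fieldType) (P : lmodType K) (hom : bool -> pred P) (mul br : P -> P -> P).
Hypothesis K_char0 : [pchar K] =i pred0.
Hypothesis HP : poisson_superalgebra hom mul br.

Let mul_bilin := ps_mul_bilin HP.
Let br_bilin := ps_br_bilin HP.
Local Notation "x ** y" := (nprod mul br x y) (at level 40).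

Lemma nprod_bilin : bilinear_op (nprod mul br).
Proof.
by split=> k x x' z; rewrite /nprod (mul_bilin.1, mul_bilin.2) (br_bilin.1, br_bilin.2)
  scalerDr addrACA.
Qed.

(* The square of an odd element vanishes (supercommutativity, char <> 2). *)
Lemma mul_odd_self x : hom true x -> mul x x = 0.
Proof.
move=> hx; apply: eq_opp_eq0 => //.
by rewrite {1}(ps_mul_scomm HP hx hx) ssignTT scaleN1r.
Qed.

Lemma br_even_self x : hom false x -> br x x = 0.
Proof.
move=> hx; apply: eq_opp_eq0 => //.
by rewrite {1}(ps_br_santi HP hx hx) ssignF scale1r.
Qed.

(* Super Jacobi for x = y = z odd reads -3 {x,{x,x}} = 0 (char <> 3). *)
Lemma br_odd_cube x : hom true x -> br x (br x x) = 0.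
Proof.
move=> hx; have J := ps_br_jacobi HP hx hx hx.
rewrite ssignTT !scaleN1r -!opprD -addrA in J.
apply: (@scale_nat_eq0 _ _ K_char0 3) => //.
by apply/eqP; rewrite -oppr_eq0 mulrS mulr2n J.
Qed.

Lemma sq_even d x : hom d x -> hom false (x ** x).
Proof.
move=> hx; rewrite -(addbb d).
apply: (homD (ps_super HP) (ps_mul_even HP hx hx) (ps_br_even HP hx hx)).
Qed.

Lemma br_sq d x : hom d x -> br x (x ** x) = 0.
Proof.
case: d => hx; rewrite /nprod.
- by rewrite mul_odd_self // add0r br_odd_cube.
- rewrite br_even_self // addr0 (ps_leibniz HP hx hx hx) br_even_self //.
  by rewrite (op0l mul_bilin) (op0r mul_bilin) scaler0 addr0.
Qed.

Section CommutingWithEven.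
Variable w : P.
Hypothesis w_even : hom false w.

Definition w_central x := exists c, hom c x /\ br x w = 0.

Lemma w_central_w : w_central w.
Proof. by exists false; split; last exact: br_even_self. Qed.

Lemma w_central_mul x : w_central x -> w_central (mul w x).
Proof.
case=> c [hx xw]; have hwx : hom c (mul w x) by have := ps_mul_even HP w_even hx.
exists c; split => //.
rewrite (ps_br_santi HP hwx w_even) (ps_leibniz HP w_even w_even hx).
rewrite br_even_self // (op0l mul_bilin) add0r (ps_br_santi HP w_even hx) xw.
by rewrite scaler0 oppr0 (op0r mul_bilin) !scaler0 oppr0.
Qed.

Lemma w_central_iter x k : w_central x -> w_central (iter k (mul w) x).
Proof. by move=> cx; elim: k => //= k; apply: w_central_mul. Qed.

(* (w.x) z = w.(x z) and x (w.z) = w.(x z): the bracket terms reduce by Leibniz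
   and supercommutativity since {z,w} = 0 (resp. {x,w} = 0) and w is even. *)
Lemma nprod_mulwl c x z : hom c x -> w_central z -> mul w x ** z = mul w (x ** z).
Proof.
move=> hx [e [hz zw]].
have hwx : hom c (mul w x) by have := ps_mul_even HP w_even hx.
rewrite /nprod (opDr mul_bilin) -(ps_mul_assoc HP); congr (_ + _).
rewrite (ps_br_santi HP hwx hz) (ps_leibniz HP hz w_even hx) zw (op0l mul_bilin).
by rewrite add0r ssignF scale1r (ps_br_santi HP hx hz) -scaleN1r -!(opZr mul_bilin) scaleN1r.
Qed.

Lemma nprod_mulwr c x z : w_central x -> hom c z -> x ** mul w z = mul w (x ** z).
Proof.
case=> e [hx xw] hz.
rewrite /nprod (opDr mul_bilin) (ps_mul_assoc HP) (ps_mul_scomm HP hx w_even) ssignF.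
rewrite scale1r -(ps_mul_assoc HP) (ps_leibniz HP hx w_even hz) xw (op0l mul_bilin).
by rewrite add0r ssignF scale1r.
Qed.

Lemma nprod_iter x z a b : w_central x -> w_central z ->
  iter a (mul w) x ** iter b (mul w) z = iter (a + b) (mul w) (x ** z).
Proof.
move=> cx cz; elim: a => [|a IHa] /=.
  elim: b => //= b IHb; have [c [hzb _]] := w_central_iter b cz.
  by rewrite (nprod_mulwr cx hzb) IHb.
have [c [hxa _]] := w_central_iter a cx.
by rewrite (nprod_mulwl hxa (w_central_iter b cz)) IHa.
Qed.

End CommutingWithEven.

Section Powers.
Variables (y : P) (d : bool).
Hypothesis hy : hom d y.

Let w := y ** y.
Let w_even : hom false w := sq_even hy.

Lemma w_central_y : w_central w y.
Proof. by exists d; split => //; exact: br_sq hy. Qed.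

Let base (b : bool) := if b then w else y.

(* Products of the base elements:  y y = w,  y w = w y = w.y,  w w = w.w. *)
Lemma nprod_base a b :
  base a ** base b = iter (a || b) (mul w) (base (~~ (a (+) b))).
Proof.
have yw : br y w = 0 by exact: br_sq hy.
have wy : br w y = 0.
  by rewrite (ps_br_santi HP w_even hy) yw scaler0 oppr0.
have ww : br w w = 0 by exact: br_even_self.
case: a; case: b; rewrite /= /nprod ?yw ?wy ?ww ?addr0 //.
by rewrite (ps_mul_scomm HP hy w_even) ssignF scale1r.
Qed.

Lemma w_central_base b : w_central w (base b).
Proof. by case: b; [exact: w_central_w | exact: w_central_y]. Qed.

Lemma npow_base n : npow mul br y n.+1 = iter n./2 (mul w) (base (odd n)).
Proof.
elim: n => // n IHn.
have -> : npow mul br y n.+2 = base false ** npow mul br y n.+1 by [].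
rewrite IHn -[base false]/(iter 0 (mul w) (base false)).
rewrite (nprod_iter w_even); try exact: w_central_base.
rewrite nprod_base -iterD /=.
by rewrite add0n uphalf_half addnC.
Qed.

Lemma npow_mul p q :
  npow mul br y p.+1 ** npow mul br y q.+1 = npow mul br y (p.+1 + q.+1).
Proof.
rewrite addSn addnS !npow_base (nprod_iter w_even); try exact: w_central_base.
rewrite nprod_base -iterD.
rewrite /= uphalf_half oddD halfD; congr (iter _ _ (base _)).
by case: (odd p); case: (odd q); rewrite /= ?add0n ?addn0 ?addnA // addnC.
Qed.

(* The linear span of the powers y^(n+1); it contains the subalgebra generated
   by y, being closed under the product by the power law. *)
Definition pow_span := span (fun v => exists n, v = npow mul br y n.+1).

Lemma pow_span_nprod a b : pow_span a -> pow_span b -> pow_span (a ** b).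
Proof.
move=> Sa Sb.
apply: (span_map (f := nprod mul br ^~ b) (bilin_l nprod_bilin b) _ Sa) => _ [p ->].
apply: (span_map (f := nprod mul br _) (bilin_r nprod_bilin _) _ Sb) => _ [q ->].
by rewrite npow_mul; apply: span_gen; exists (p + q.+1)%N.
Qed.

Lemma gen_subalg_span a : gen_subalg mul br y a -> pow_span a.
Proof.
elim=> [|||k a' _|a' b _ Sa _ Sb]; try by constructor.
- by apply: span_gen; exists 0%N.
- exact: pow_span_nprod.
Qed.

(* Associativity on the span of the powers: both sides are linear in each
   argument, so it suffices to check it on powers, where it is the power law. *)
Lemma pow_span_assoc a b c : pow_span a -> pow_span b -> pow_span c ->
  (a ** b) ** c = a ** (b ** c).
Proof.
have L z := bilin_l nprod_bilin z; have R z := bilin_r nprod_bilin z.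
move=> Sa Sb Sc.
apply: (span_ext (f := fun u => (u ** b) ** c) (g := fun u => u ** (b ** c))
  (lin_comp (L c) (L b)) (L _) _ Sa) => _ [p ->].
set yp := npow mul br y p.+1.
apply: (span_ext (f := fun u => (yp ** u) ** c) (g := fun u => yp ** (u ** c))
  (lin_comp (L c) (R yp)) (lin_comp (R yp) (L c)) _ Sb) => _ [q ->].
set yq := npow mul br y q.+1.
apply: (span_ext (f := fun u => (yp ** yq) ** u) (g := fun u => yp ** (yq ** u))
  (R _) (lin_comp (R yp) (R yq)) _ Sc) => _ [r ->].
rewrite /yp /yq (npow_mul p q) (npow_mul q r).
rewrite -[(p.+1 + q.+1)%N]/(p + q.+1).+1 -[(q.+1 + r.+1)%N]/(q + r.+1).+1.
by rewrite !npow_mul !addSn !addnS addnA.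
Qed.

End Powers.
End Poisson.

Theorem mainTheorem3 (K : fieldType) (P : lmodType K)
    (hom : bool -> pred P) (mul br : P -> P -> P) (y : P) :
  [pchar K] =i pred0 ->
  poisson_superalgebra hom mul br ->
  (exists d : bool, hom d y) ->
  [/\ (forall p q : nat, (1 <= p)%N -> (1 <= q)%N ->
         nprod mul br (npow mul br y p) (npow mul br y q) = npow mul br y (p + q)),
      (forall a b c, gen_subalg mul br y a -> gen_subalg mul br y b -> gen_subalg mul br y c ->
         nprod mul br (nprod mul br a b) c = nprod mul br a (nprod mul br b c))
    & (hom true y -> mul y y = 0 /\ npow mul br y 2 = br y y)].
Proof.
move=> K_char0 HP [d hy]; split.
- by move=> [|p] [|q] // _ _; exact: npow_mul K_char0 HP y d hy p q.
- move=> a b c Ga Gb Gc.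
  by apply: (pow_span_assoc K_char0 HP hy); apply: (gen_subalg_span K_char0 HP hy).
- move=> y_odd; have yy : mul y y = 0 := mul_odd_self K_char0 HP y_odd.
  by split=> //; rewrite /= /nprod yy add0r.
Qed.
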